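(* Let $a,b,c,d\in R_\omega-\mathbb{F}_q$ be such that $ad-bc=1$ and $|a|_\omega\ge|b|_\omega$. Then $|c|_\omega\ge|d|_\omega$.
   Context: $\mathbb{F}_q$ is a finite field of order $q$, $K$ is the function field of a geometrically connected smooth projective curve $\mathbf C$ over $\mathbb{F}_q$, $\omega$ is a normalized discrete valuation of $K$ (corresponding to a closed point of $\mathbf C$), $K_\omega$ is the completion of $K$ at $\omega$, $q_\omega$ is the order of the residue field of $\omega$, and $|x|_\omega=q_\omega^{-\omega(x)}$. $R_\omega$ is the ring of elements of $K$ whose only poles are at the closed point $\omega$ (the affine coordinate ring of $\mathbf C-\{\omega\}$). *)

From HB Require Import structures.
From mathcomp Require Import all_boot all_order all_algebra all_field.
Set Implicit Arguments. Unset Strict Implicit. Unset Printing Implicit Defensive.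
Import Order.TTheory GRing.Theory Num.Theory.
Local Open Scope ring_scope.

(* Setting: F = F_q a finite field, K a field, iota : F -> K the structure
   map making K an F-algebra; the constants F_q inside K are the image of iota. *)

(* K is the function field of a geometrically connected smooth projective
   curve over F: K is finitely generated of transcendence degree 1 over F
   (there is t transcendental over F with K a finite-dimensional F(t)-vector
   space) and F is algebraically closed in K (geometric connectedness). *)
Definition is_function_field (F : finFieldType) (K : fieldType)
    (iota : {rmorphism F -> K}) : Prop :=
  (forall x : K, (exists p : {poly F}, p != 0 /\ root (map_poly iota p) x) ->
     exists c : F, x = iota c) /\
  (exists t : K,
     (forall p : {poly F}, (map_poly iota p).[t] = 0 -> p = 0) /\
     exists s : seq K, forall x : K,
       exists (num den : 'I_(size s) -> {poly F}),
         (forall i, (map_poly iota (den i)).[t] != 0) /\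
         x = \sum_(i < size s)
               ((map_poly iota (num i)).[t] / (map_poly iota (den i)).[t]) * s`_i).

(* Normalized discrete valuation of K trivial on F_q (= closed point of the
   curve).  The value at 0 (formally +oo) is irrelevant and unconstrained. *)
Definition is_place (F : finFieldType) (K : fieldType)
    (iota : {rmorphism F -> K}) (v : K -> int) : Prop :=
  (forall x y : K, x != 0 -> y != 0 -> v (x * y) = v x + v y) /\
  (forall x y : K, x != 0 -> y != 0 -> x + y != 0 ->
     Num.min (v x) (v y) <= v (x + y)) /\
  (forall c : F, c != 0 -> v (iota c) = 0) /\
  (forall n : int, exists x : K, x != 0 /\ v x = n).

Definition val_ring (K : fieldType) (w : K -> int) (y : K) : Prop :=
  y = 0 \/ 0 <= w y.
Definition val_ideal (K : fieldType) (w : K -> int) (y : K) : Prop :=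
  y = 0 \/ 0 < w y.

Definition residue_card (K : fieldType) (w : K -> int) (n : nat) : Prop :=
  exists s : seq K,
    size s = n /\
    (forall i, (i < n)%N -> val_ring w s`_i) /\
    (forall i j, (i < n)%N -> (j < n)%N -> i != j -> ~ val_ideal w (s`_i - s`_j)) /\
    (forall y, val_ring w y -> exists2 i, (i < n)%N & val_ideal w (y - s`_i)).

Definition absv (K : fieldType) (w : K -> int) (qw : nat) (x : K) : rat :=
  if x == 0 then 0 else (qw%:R : rat) ^ (- w x).

(* R_w: elements of K whose only poles are at (the place of) w, i.e.
   v x >= 0 for every place v distinct from w. *)
Definition in_Rw (F : finFieldType) (K : fieldType)
    (iota : {rmorphism F -> K}) (w : K -> int) (x : K) : Prop :=
  x = 0 \/
  forall v : K -> int, is_place iota v ->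
    (exists y : K, y != 0 /\ v y != w y) -> 0 <= v x.

Definition in_Rw_nonconst (F : finFieldType) (K : fieldType)
    (iota : {rmorphism F -> K}) (w : K -> int) (x : K) : Prop :=
  in_Rw iota w x /\ ~ (exists c : F, x = iota c).

From HB Require Import structures.
From mathcomp Require Import all_boot all_order all_algebra all_field.
From mathcomp Require Import zify ring.
From mathcomp Require Import boolp classical_sets.
Import Order.TTheory GRing.Theory Num.Theory.
Local Open Scope ring_scope.

Set Implicit Arguments. Unset Strict Implicit. Unset Printing Implicit Defensive.

(* A non-constant [x] of [R_w] is transcendental over [F_q], so it has a pole at
   some place of [K]: a subring of [K] maximal among those containing [F_q[1/x]]
   but not [x] is a valuation ring (Chevalley's argument), and since [K] is
   finite over [F_q(t)] this valuation ring is discrete, i.e. it comes from a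
   normalised valuation [v] with [v x < 0]. As [x] has no pole away from [w],
   [w x < 0], i.e. [|x|_w > 1]. Now if [|b| <= |a|] but [|c| < |d|], then
   [|bc| < |ad|], and the strict triangle inequality gives
   [1 = |ad - bc| = |a| |d| > 1]. *)

Lemma exists_minn (P : nat -> Prop) :
  (exists n, P n) -> exists2 n, P n & forall k, P k -> (n <= k)%N.
Proof.
move=> [n Pn]; have exP : exists n, `[< P n >] by exists n; apply/asboolP.
by case: (ex_minnP exP) => k /asboolP Pk kmin; exists k => // j /asboolP /kmin.
Qed.

Lemma exists_maxn (P : nat -> Prop) B : (exists n, P n) -> (forall n, P n -> (n <= B)%N) ->
  exists2 n, P n & forall k, P k -> (k <= n)%N.
Proof.
move=> [n Pn] PB; have exP : exists n, `[< P n >] by exists n; apply/asboolP.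
have {}PB j : `[< P j >] -> (j <= B)%N by move/asboolP/PB.
by case: (ex_maxnP exP PB) => k /asboolP Pk kmax; exists k => // j /asboolP /kmax.
Qed.

(** * Polynomial evaluation and dimension over [F(t)] *)

Section PolyEval.
Variables (F K : fieldType) (iota : {rmorphism F -> K}).

Definition peval (z : K) : {poly F} -> K :=
  horner_morph (fun a => mulrC z (iota a)).

HB.instance Definition _ (z : K) := GRing.RMorphism.on (peval z).

Lemma pevalC z c : peval z c%:P = iota c.
Proof. exact: horner_morphC. Qed.

Lemma pevalX z : peval z 'X = z.
Proof. exact: horner_morphX. Qed.

Definition transcendental (t : K) := forall p, peval t p = 0 -> p = 0.

Lemma peval_neq0 t p : transcendental t -> p != 0 -> peval t p != 0.
Proof. by move=> Ht; apply: contraNneq => /Ht ->. Qed.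

Definition dim_over_le (t : K) (m : nat) :=
  forall zs : 'I_m.+1 -> K, exists2 g : 'I_m.+1 -> {poly F},
    exists i, g i != 0 & \sum_i peval t (g i) * zs i = 0.

Section Span.
Variables (t : K) (s : seq K).
Hypothesis span : forall x : K,
  exists (num den : 'I_(size s) -> {poly F}),
    (forall i, peval t (den i) != 0) /\
    x = \sum_i (peval t (num i) / peval t (den i)) * s`_i.

Lemma common_denominator x : exists (D : {poly F}) (c : 'I_(size s) -> {poly F}),
  D != 0 /\ peval t D * x = \sum_i peval t (c i) * s`_i.
Proof.
have [num [den [den0 ->]]] := span x.
exists (\prod_i den i), (fun i => num i * \prod_(j | j != i) den j); split.
  rewrite prodf_seq_neq0; apply/allP => i _ /=.
  by apply: contra_neq (den0 i) => ->; rewrite rmorph0.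
rewrite mulr_sumr; apply: eq_bigr => i _; rewrite mulrA; congr (_ * _).
rewrite rmorphM !rmorph_prod (bigD1 i) //=.
by move: (den0 i) => ?; field.
Qed.

Lemma dim_over_le_span : dim_over_le t (size s).
Proof.
move=> zs; set m := size s.
have [D /fin_all_exists[c Dc]] := fin_all_exists (fun j => common_denominator (zs j)).
(* The coefficients of the [zs] on [s], padded with a zero column. *)
pose A := \matrix_(j, i < m.+1) if insub (val i) is Some k then c j k else 0.
have /det0P[v v0 vA] : \det A == 0.
  rewrite (expand_det_col _ ord_max) big1 // => i _.
  by rewrite mxE insubN ?mul0r // -leqNgt.
have [j vj0] : exists j, v 0 j != 0.
  by apply/existsP; apply: contraNT v0; rewrite negb_exists => /forallP v0;
    apply/eqP/rowP => j; rewrite mxE; apply/eqP/negPn.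
exists (fun j => v 0 j * D j); first by exists j; rewrite mulf_neq0 ?(proj1 (Dc j)).
under eq_bigr => k _ do rewrite rmorphM -mulrA (proj2 (Dc k)) mulr_sumr.
rewrite exchange_big big1 //= => i _.
have := congr1 (fun M : 'M[{poly F}]_(1, m.+1) => M 0 (widen_ord (leqnSn m) i)) vA.
rewrite !mxE => vAi.
under eq_bigr => k _ do rewrite mulrA -rmorphM.
rewrite -mulr_suml -rmorph_sum.
suff -> : \sum_k v 0 k * c k i = 0 by rewrite rmorph0 mul0r.
rewrite -[RHS]vAi; apply: eq_bigr => k _; rewrite mxE insubT //= => ?.
by congr (_ * c k _); apply: val_inj.
Qed.
End Span.

Definition reversed_poly (D : nat) (p : {poly F}) := \poly_(k < D) p`_(D.-1 - k).

Lemma peval_reversed z (p : {poly F}) D : z != 0 -> (size p <= D)%N ->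
  peval z p = z ^+ D.-1 * peval z^-1 (reversed_poly D p).
Proof.
move=> z0 sp; rewrite /peval /horner_morph.
rewrite (@horner_coef_wide _ D) ?size_map_poly // (@horner_coef_wide _ D); last first.
  by rewrite size_map_poly size_poly.
rewrite mulr_sumr (reindex_inj rev_ord_inj) /=; apply: eq_bigr => k _.
rewrite !coef_map coef_poly ltn_ord -subn1.
have -> : (D - 1 - k = D - k.+1)%N by lia.
rewrite mulrCA; congr (_ * _).
have -> : (D - 1 = (D - k.+1) + k)%N by have := ltn_ord k; lia.
by rewrite exprD exprVn -mulrA mulfV ?mulr1 // expf_neq0.
Qed.

Section Inverse.
Variables (t : K) (m : nat).
Hypotheses (t0 : t != 0) (t_tr : transcendental t).

Lemma transcendentalV : transcendental t^-1.
Proof.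
move=> p p0; have ti0 : t^-1 != 0 by rewrite invr_eq0.
have /t_tr/polyP rev0 : peval t (reversed_poly (size p) p) = 0.
  have := peval_reversed ti0 (leqnn (size p)); rewrite p0 invrK => /esym/eqP.
  by rewrite mulf_eq0 expf_eq0 (negbTE ti0) andbF => /eqP.
apply/polyP => i; rewrite coef0.
have [ip|] := ltnP i (size p); last exact: nth_default.
have := rev0 ((size p).-1 - i)%N; rewrite coef0 coef_poly.
have -> : ((size p).-1 - i < size p)%N by lia.
by have -> : ((size p).-1 - ((size p).-1 - i) = i)%N by lia.
Qed.

Lemma dim_over_leV : dim_over_le t m -> dim_over_le t^-1 m.
Proof.
move=> dimt zs; have [g [i0 gi0] gz0] := dimt zs.
pose D := (\max_i size (g i))%N.
have sD i : (size (g i) <= D)%N by apply: (@leq_bigmax _ (fun j => size (g j))).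
exists (fun i => reversed_poly D (g i)).
  exists i0; apply: contra_neq gi0 => rev0; apply: t_tr.
  by rewrite (peval_reversed t0 (sD i0)) rev0 rmorph0 mulr0.
apply/eqP; rewrite -(mulrI_eq0 _ (mulfI (expf_neq0 D.-1 t0))) mulr_sumr -[X in _ == X]gz0.
by apply/eqP/eq_bigr => i _; rewrite (peval_reversed t0 (sD i)) mulrA.
Qed.
End Inverse.
End PolyEval.

Lemma poly_split_pow (R : fieldType) (f g : {poly R}) : (1 < size f)%N -> g != 0 ->
  exists e g', g = f ^+ e * g' /\ ~~ (f %| g').
Proof.
move=> f_gt1; have [N] := ubnP (size g); elim: N g => // N IH g sgN g0.
have [/divpK gE|nfg] := boolP (f %| g); last by exists 0%N, g; rewrite expr0 mul1r.
have q0 : g %/ f != 0 by apply: contra_neq g0 => q0; rewrite -gE q0 mul0r.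
have f0 : f != 0 by rewrite -size_poly_gt0 ltnW.
have [|e [g' [qE nfg']]] := IH (g %/ f) _ q0.
  by move: sgN; rewrite -{1}gE size_mul // -subn1; move: (size _) (size f) f_gt1 => a b; lia.
by exists e.+1, g'; rewrite -gE qE mulrAC -exprSr.
Qed.

(** * Maximal subrings avoiding an element are valuation rings *)

Section Subring.
Variables (R : ringType) (O : set R).

Definition is_subring : Prop :=
  [/\ O 1, forall a b, O a -> O b -> O (a - b) & forall a b, O a -> O b -> O (a * b)].

Hypothesis O_subring : is_subring.

Lemma subring1 : O 1. Proof. by case: O_subring. Qed.

Lemma subringB a b : O a -> O b -> O (a - b). Proof. by case: O_subring => _ + _; apply. Qed.

Lemma subringM a b : O a -> O b -> O (a * b). Proof. by case: O_subring => _ _; apply. Qed.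

Lemma subring0 : O 0. Proof. by rewrite -(subrr 1); apply: subringB; apply: subring1. Qed.

Lemma subringN a : O a -> O (- a). Proof. by rewrite -sub0r; apply: subringB subring0. Qed.

Lemma subringD a b : O a -> O b -> O (a + b).
Proof. by move=> Oa Ob; rewrite -[b]opprK; apply/subringB/subringN. Qed.

Lemma subringX a n : O a -> O (a ^+ n).
Proof.
move=> Oa; elim: n => [|n IH]; first by rewrite expr0; apply: subring1.
by rewrite exprS; apply: subringM.
Qed.

Lemma subring_sum (I : Type) (r : seq I) (P : pred I) (f : I -> R) :
  (forall i, P i -> O (f i)) -> O (\sum_(i <- r | P i) f i).
Proof. by move=> Of; apply: big_ind => //; [apply: subring0 | apply: subringD]. Qed.
End Subring.

Section AvoidingSubring.
Local Open Scope classical_set_scope.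
Variables (F K : fieldType) (iota : {rmorphism F -> K}) (x y : K).

Definition avoiding_subring (S : set K) :=
  [/\ is_subring S, forall p, S (peval iota y p) & ~ S x].

Lemma bigcup_chain_avoiding (C : set (set K)) :
  (forall X, C X -> X !=set0 -> avoiding_subring X) -> total_on C subset ->
  (exists2 X, C X & avoiding_subring X) -> avoiding_subring (\bigcup_(X in C) X).
Proof.
move=> Cav Ctot [X0 CX0 avX0].
have closed (op : K -> K -> K) :
    (forall X, avoiding_subring X -> forall a b, X a -> X b -> X (op a b)) ->
    forall a b, (\bigcup_(X in C) X) a -> (\bigcup_(X in C) X) b ->
    (\bigcup_(X in C) X) (op a b).
  move=> opX a b [X1 CX1 X1a] [X2 CX2 X2b].
  have [av1 av2] := (Cav _ CX1 (ex_intro _ _ X1a), Cav _ CX2 (ex_intro _ _ X2b)).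
  case: (Ctot _ _ CX1 CX2) => sub; [exists X2 | exists X1] => //.
  - exact: opX (sub _ X1a) X2b.
  - exact: opX X1a (sub _ X2b).
split; first split.
- by exists X0 => //; case: avX0 => /subring1.
- by apply: (closed (fun a b => a - b)) => X [/subringB].
- by apply: (closed (fun a b => a * b)) => X [/subringM].
- by move=> p; exists X0 => //; case: avX0.
- by move=> [X CX Xx]; have [] := Cav _ CX (ex_intro _ _ Xx).
Qed.

Lemma exists_maximal_avoiding_subring : (forall p, peval iota y p != x) ->
  exists2 O, avoiding_subring O &
    forall S, avoiding_subring S -> O `<=` S -> S `<=` O.
Proof.
move=> Fy_x.
have base : avoiding_subring (range (peval iota y)).
  split; first split.
  - by exists 1; rewrite ?rmorph1.
  - by move=> _ _ [p _ <-] [q _ <-]; exists (p - q); rewrite ?rmorphB.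
  - by move=> _ _ [p _ <-] [q _ <-]; exists (p * q); rewrite ?rmorphM.
  - by move=> p; exists p.
  - by move=> [p _]; apply/eqP.
(* [Zorn_bigcup] also asks for an upper bound of the empty chain. *)
pose P X := X = set0 \/ avoiding_subring X.
have P_av X : P X -> X !=set0 -> avoiding_subring X by case=> // -> /set0P/eqP.
have [O [PO Omax]] : exists O, P O /\ forall S, O `<` S -> ~ P S.
  apply: Zorn_bigcup => C CP Ctot.
  have [avC|noav] := pselect (exists2 X, C X & avoiding_subring X).
    by right; apply: bigcup_chain_avoiding => // X /CP/P_av.
  left; apply/seteqP; split => // a [X CX Xa].
  by apply: noav; exists X => //; apply: P_av (CP _ CX) _; exists a.
have avO : avoiding_subring O.
  case: PO => // O0; case: (Omax _ _ (or_intror base)).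
  by rewrite O0; split => // /(_ (peval iota y 1)); apply; exists 1.
exists O => // S avS OS; apply: contrapT => SO.
by apply: (Omax S _ (or_intror avS)).
Qed.
End AvoidingSubring.

Section MaximalAvoidingSubring.
Local Open Scope classical_set_scope.
Variables (F K : fieldType) (iota : {rmorphism F -> K}) (x y : K) (O : set K).
Hypotheses (xy1 : x * y = 1) (O_av : avoiding_subring iota x y O).
Hypothesis O_max : forall S, avoiding_subring iota x y S -> O `<=` S -> S `<=` O.

Let O_subring : is_subring O. Proof. by case: O_av. Qed.
Let O0 := subring0 O_subring.
Let O1 := subring1 O_subring.
Let OB := subringB O_subring.
Let OD := subringD O_subring.
Let OM := subringM O_subring.
Let Osum := subring_sum O_subring.
Let Oy : O y. Proof. by case: O_av => _ /(_ 'X); rewrite pevalX. Qed.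
Let Ox : ~ O x. Proof. by case: O_av. Qed.

Lemma one_neq_y_mul r : O r -> 1 <> y * r.
Proof. by move=> Or yr1; apply: Ox; rewrite -[x]mulr1 yr1 mulrA xy1 mul1r. Qed.

Definition y_relation z n := exists2 a : nat -> K, forall i, O (a i) &
  1 = y * \sum_(i < n) a i * z ^+ i.

Lemma mem_or_y_relation z : O z \/ exists n, y_relation z n.
Proof.
have [|norel] := pselect (exists n, y_relation z n); [by right | left].
pose S u := exists2 p : {poly K}, forall i, O p`_i & u = p.[z].
have Sconst u : O u -> S u.
  move=> Ou; exists u%:P; last by rewrite hornerC.
  by move=> i; rewrite coefC; case: eqP => _ //; apply: O0.
suff avS : avoiding_subring iota x y S.
  apply: (O_max avS) => //; exists 'X; last by rewrite hornerX.
  by move=> i; rewrite coefX; case: eqP => _; [apply: O1 | apply: O0].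
split; first split.
- by apply: Sconst; apply: O1.
- move=> _ _ [p Op ->] [q Oq ->]; exists (p - q); last by rewrite hornerD hornerN.
  by move=> i; rewrite coefB; apply: OB.
- move=> _ _ [p Op ->] [q Oq ->]; exists (p * q); last by rewrite hornerM.
  by move=> i; rewrite coefM; apply: Osum => j _; apply: OM.
- by move=> p; apply: Sconst; case: O_av => _ + _; apply.
- move=> [p Op xp]; apply: norel; exists (size p), (fun i => p`_i) => //.
  by rewrite -horner_coef -xp mulrC xy1.
Qed.

Lemma one_sub_y_mul_unit r : O r -> 1 - y * r != 0 /\ O (1 - y * r)^-1.
Proof.
move=> Or; set u := 1 - y * r.
have u0 : u != 0 by rewrite subr_eq0; apply/eqP; exact: one_neq_y_mul.
split => //; case: (mem_or_y_relation u^-1) => // -[n [a Oa a1]].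
have [r' Or' ur'] : exists2 r', O r' & u ^+ n = 1 - y * r'.
  elim: n {a Oa a1} => [|n [r' Or' ur']]; first by exists 0; rewrite ?expr0 ?mulr0 ?subr0.
  exists (r + r' - y * r * r'); last by rewrite exprS ur' /u; ring.
  by apply: OB; [apply: OD | apply: OM => //; apply: OM].
have yu : u ^+ n = y * \sum_(i < n) a i * u ^+ (n - i).
  rewrite -[u ^+ n]mul1r a1 -mulrA mulr_suml; congr (_ * _); apply: eq_bigr => i _.
  rewrite -mulrA exprVn; congr (_ * _).
  have -> : u ^+ n = u ^+ (n - i) * u ^+ i by rewrite -exprD subnK // ltnW.
  by rewrite mulrCA mulVf ?mulr1 // expf_neq0.
exfalso; apply: (@one_neq_y_mul (\sum_(i < n) a i * u ^+ (n - i) + r')).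
  apply: OD => //; apply: Osum => i _; apply: OM => //.
  by apply: (subringX O_subring); apply: OB => //; apply: OM.
by rewrite mulrDr -yu ur'; ring.
Qed.

Lemma y_relation_widen z n k : (n <= k)%N -> y_relation z n -> y_relation z k.
Proof.
move=> nk [a Oa a1]; exists (fun i => if (i < n)%N then a i else 0).
  by move=> i; case: ifP.
rewrite a1 (big_ord_widen _ (fun i => a i * z ^+ i) nk) big_mkcond /=.
by congr (_ * _); apply: eq_bigr => i _; case: ifP => _ //; rewrite mul0r.
Qed.

Lemma y_relation_gt1 z n : y_relation z n -> (1 < n)%N.
Proof.
rewrite ltnNge => zn; apply/negP => /y_relation_widen/(_ zn)[a Oa].
by rewrite big_ord_recl big_ord0 addr0 expr0 mulr1; apply: one_neq_y_mul.
Qed.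

Lemma y_relation_inv_top z N : z != 0 -> y_relation z^-1 N.+1 ->
  exists2 c : nat -> K, forall i, O (c i) & z ^+ N = \sum_(i < N) c i * z ^+ i.
Proof.
move=> z0 [b Ob b1]; have [u0 Ou] := one_sub_y_mul_unit (Ob 0%N).
set u := 1 - y * b 0%N in u0 Ou.
exists (fun i => u^-1 * y * b (N - i)%N) => [i|]; first by apply: OM => //; apply: OM.
have zN : z ^+ N = y * \sum_(j < N.+1) b j * z ^+ (N - j).
  rewrite -[z ^+ N]mulr1 b1 mulrCA mulr_sumr; congr (_ * _); apply: eq_bigr => j _.
  rewrite mulrCA exprVn; congr (_ * _).
  have -> : z ^+ N = z ^+ (N - j) * z ^+ j by rewrite -exprD subnK // -ltnS.
  by rewrite mulfK // expf_neq0.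
rewrite big_ord_recl subn0 mulrDr in zN.
have -> : z ^+ N = u^-1 * (y * \sum_(i < N) b (bump 0 i) * z ^+ (N - bump 0 i)).
  by apply: (canRL (mulKf u0)); rewrite /u mulrBl mul1r {1}zN; ring.
rewrite mulr_sumr mulr_sumr (reindex_inj rev_ord_inj); apply: eq_bigr => i _ /=.
rewrite !mulrA /bump /= add1n; congr (_ * b _ * z ^+ _); have := ltn_ord i; lia.
Qed.

Lemma y_relation_reduce z n : z != 0 ->
  y_relation z n.+2 -> y_relation z^-1 n.+2 -> y_relation z n.+1.
Proof.
move=> z0 [a Oa a1] /(y_relation_inv_top z0)[c Oc zN].
exists (fun i => a i + a n.+1 * c i) => [i|]; first by apply: OD => //; apply: OM.
rewrite a1 big_ord_recr /= zN mulr_sumr -big_split /=.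
by congr (_ * _); apply: eq_bigr => i _; rewrite mulrDl mulrA.
Qed.

(* Induction on [n + k]: the longer relation is shortened using the other one. *)
Lemma no_y_relations z n k : z != 0 -> y_relation z n -> y_relation z^-1 k -> False.
Proof.
move=> z0 zn zk; have [N] := ubnP (n + k).
elim: N => // N IH in z n k z0 zn zk *; rewrite ltnS => nkN.
wlog kn : z n k z0 zn zk nkN / (k <= n)%N.
  move=> W; case: (leqP k n) => [|/ltnW nk]; first exact: W z n k z0 zn zk nkN.
  by apply: (W z^-1 k n); rewrite ?invr_eq0 ?invrK // addnC.
case: n => [|[|n]] in zn kn nkN *; try by have := y_relation_gt1 zn.
apply: (IH z n.+1 k z0 _ zk); last by lia.
exact: y_relation_reduce z0 zn (y_relation_widen kn zk).
Qed.

Lemma maximal_avoiding_valuation z : z != 0 -> O z \/ O z^-1.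
Proof.
move=> z0; case: (mem_or_y_relation z) => [|[n zn]]; first by left.
case: (mem_or_y_relation z^-1) => [|[k zk]]; first by right.
by case: (no_y_relations z0 zn zk).
Qed.
End MaximalAvoidingSubring.

(** * Valuation rings of a function field are discrete *)

Section ValuationRing.
Variables (F : finFieldType) (K : fieldType) (iota : {rmorphism F -> K}) (O : set K).
Hypotheses (O_subring : is_subring O) (O_const : forall c, O (iota c)).
Hypothesis O_valuation : forall z, z != 0 -> O z \/ O z^-1.

Let O0 := subring0 O_subring.
Let O1 := subring1 O_subring.
Let ON := subringN O_subring.
Let OD := subringD O_subring.
Let OM := subringM O_subring.
Let OX := subringX O_subring.
Let Osum := subring_sum O_subring.

Definition mideal z := O z /\ (z = 0 \/ ~ O z^-1).
Definition Ounit z := [/\ z != 0, O z & O z^-1].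

Lemma mideal0 : mideal 0. Proof. by split; [apply: O0 | left]. Qed.
Lemma midealO z : mideal z -> O z. Proof. by case. Qed.

Lemma mideal_invN z : mideal z -> z != 0 -> ~ O z^-1.
Proof. by move=> [_ [->|//]]; rewrite eqxx. Qed.

Lemma nmideal_inv z : O z -> z != 0 -> ~ mideal z -> O z^-1.
Proof. by move=> Oz z0 zm; apply: contrapT => Ozi; apply: zm; split => //; right. Qed.

Lemma Ounit_mideal z : Ounit z -> ~ mideal z.
Proof. by case=> z0 _ Ozi /mideal_invN/(_ z0). Qed.

Lemma mideal1 : ~ mideal 1.
Proof. by apply: Ounit_mideal; split; rewrite ?oner_eq0 ?invr1. Qed.

Lemma OunitM a b : Ounit a -> Ounit b -> Ounit (a * b).
Proof.
by case=> a0 Oa Oai [b0 Ob Obi]; split; rewrite ?mulf_neq0 ?invfM //; apply: OM.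
Qed.

Lemma OunitV a : Ounit a -> Ounit a^-1.
Proof. by case=> a0 Oa Oai; split; rewrite ?invr_eq0 ?invrK. Qed.

Lemma midealMr a b : mideal a -> O b -> mideal (a * b).
Proof.
move=> [Oa am] Ob; split; first exact: OM.
have [->|a0] := eqVneq a 0; first by left; rewrite mul0r.
have [->|b0] := eqVneq b 0; first by left; rewrite mulr0.
right => Oabi; case: am => [/eqP|]; first by rewrite (negbTE a0).
by apply; rewrite -[a^-1]mulr1 -(mulfV b0) mulrCA -invfM mulrC; apply: OM.
Qed.

Lemma midealMl a b : O a -> mideal b -> mideal (a * b).
Proof. by rewrite mulrC => Oa bm; apply: midealMr. Qed.

Lemma midealN a : mideal a -> mideal (- a).
Proof. by rewrite -mulN1r; apply: midealMl; apply/ON/O1. Qed.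

Lemma midealD a b : mideal a -> mideal b -> mideal (a + b).
Proof.
move=> am bm.
have [->|a0] := eqVneq a 0; first by rewrite add0r.
have [->|b0] := eqVneq b 0; first by rewrite addr0.
have ab0 : a / b != 0 by rewrite mulf_neq0 ?invr_eq0.
case: (O_valuation ab0) => [Oab|]; last rewrite invfM invrK mulrC => Oba.
  have -> : a + b = (a / b + 1) * b by rewrite mulrDl divfK ?mul1r.
  by apply: midealMl => //; apply: OD.
have -> : a + b = (1 + b / a) * a by rewrite mulrDl divfK ?mul1r.
by apply: midealMl => //; apply: OD.
Qed.

Lemma midealB a b : mideal a -> mideal b -> mideal (a - b).
Proof. by move=> am bm; apply/midealD/midealN. Qed.

Lemma mideal_sum (I : Type) (r : seq I) (P : pred I) (f : I -> K) :
  (forall i, P i -> mideal (f i)) -> mideal (\sum_(i <- r | P i) f i).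
Proof. by move=> fm; apply: big_ind => //; [apply: mideal0 | apply: midealD]. Qed.

Section Discrete.
Variables (x t : K) (m : nat).
Hypotheses (Ox : ~ O x) (Ot : O t) (t_tr : transcendental iota t).
Hypothesis t_dim : dim_over_le iota t m.

Let x0 : x != 0. Proof. by apply/eqP => x0; apply: Ox; rewrite x0; apply: O0. Qed.
Let midealxV : mideal x^-1. Proof. by split; [case: (O_valuation x0) | right; rewrite invrK]. Qed.

Lemma O_peval p : O (peval iota t p).
Proof.
rewrite /peval /horner_morph horner_coef; apply: Osum => i _; apply: OM; last exact: OX.
by rewrite coef_map; apply: O_const.
Qed.

(* Otherwise dividing a dependence relation between the powers of [x] by its
   leading term would put [1] in the maximal ideal. *)
Lemma exists_peval_mideal : exists2 f, f != 0 & mideal (peval iota t f).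
Proof.
apply: contrapT => nom.
have Ounit_peval g : g != 0 -> O (peval iota t g)^-1.
  move=> g0; apply: nmideal_inv (O_peval g) (peval_neq0 t_tr g0) _ => gm.
  by apply: nom; exists g.
have [g [i0 gi0] gx0] := t_dim (fun i => x ^+ i).
pose k := [arg max_(i > i0 | g i != 0) (i : nat)].
have [{}k gk0 kmax] : extremum_spec geq (fun i => g i != 0) (fun i : 'I_m.+1 => (i : nat)) k.
  exact: arg_maxnP.
apply: mideal1.
have gkt0 := peval_neq0 t_tr gk0.
have : \sum_i peval iota t (g i) / peval iota t (g k) * (x ^+ i * x^-1 ^+ k) = 0.
  have := congr1 (fun z => x^-1 ^+ k / peval iota t (g k) * z) gx0.
  rewrite mulr0 mulr_sumr => e; rewrite -[RHS]e; apply: eq_bigr => i _; ring.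
rewrite (bigD1 k) //= mulfV // mul1r -exprMn mulfV // expr1n.
move=> /eqP; rewrite addr_eq0 => /eqP ->; apply/midealN/mideal_sum => i ik.
have [->|gi] := eqVneq (g i) 0; first by rewrite rmorph0 !mul0r; apply: mideal0.
have ik' : (i < k)%N.
  by rewrite ltn_neqAle (kmax _ gi : (i <= k)%N) andbT; apply: contra ik => /eqP/val_inj ->.
have -> : x ^+ i * x^-1 ^+ k = x^-1 * x^-1 ^+ (k - i.+1).
  by rewrite -exprS subnSK // -{1}(subnK (ltnW ik')) exprD mulrCA -exprMn mulfV // expr1n mulr1.
rewrite mulrCA; apply: midealMr => //; apply: OM; last by apply: OX; case: midealxV.
by apply: OM; [exact: O_peval | exact: Ounit_peval].
Qed.

Lemma exists_peval_div z : O z -> z != 0 ->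
  exists2 h : {poly F}, h != 0 & O (peval iota t h / z).
Proof.
move=> Oz z0; have [g [j0 gj0] gz] := t_dim (fun i => z ^+ i).
pose i := [arg min_(i < j0 | g i != 0) (i : nat)].
have [{}i gi imin] : extremum_spec leq (fun j => g j != 0) (fun j : 'I_m.+1 => (j : nat)) i.
  exact: arg_minnP.
exists (g i) => //.
have -> : peval iota t (g i) / z =
    - \sum_(j | j != i) peval iota t (g j) * (z ^+ j / z ^+ i.+1).
  move: gz; rewrite (bigD1 i) //= => /eqP; rewrite addr_eq0 => /eqP gzi.
  have -> : peval iota t (g i) / z = peval iota t (g i) * z ^+ i / z ^+ i.+1.
    by rewrite exprSr invfM mulrA mulfK // expf_neq0.
  rewrite gzi mulNr mulr_suml.
  by congr (- _); apply: eq_bigr => j _; rewrite mulrA.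
apply/ON/Osum => j ji; have [->|gj] := eqVneq (g j) 0; first by rewrite rmorph0 mul0r.
have lt_ij : (i < j)%N.
  by rewrite ltn_neqAle (imin _ gj : (i <= j)%N) andbT; apply: contra ji => /eqP/val_inj ->.
rewrite -(subnK lt_ij) exprD mulfK ?expf_neq0 //.
by apply: OM; [exact: O_peval | exact: OX].
Qed.

Lemma exists_min_peval_mideal : exists f : {poly F}, [/\ f != 0, mideal (peval iota t f) &
  forall g, g != 0 -> mideal (peval iota t g) -> (size f <= size g)%N].
Proof.
have [h h0 hm] := exists_peval_mideal.
have [n [f [f0 fm <-]] nmin] := exists_minn (ex_intro (fun n => exists g : {poly F},
  [/\ g != 0, mideal (peval iota t g) & size g = n]) _ (ex_intro _ h (And3 h0 hm erefl))).
by exists f; split => // g g0 gm; apply: nmin; exists g.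
Qed.

Section MinimalPoly.
Variable f : {poly F}.
Hypotheses (f0 : f != 0) (f_mideal : mideal (peval iota t f)).
Hypothesis f_min : forall g, g != 0 -> mideal (peval iota t g) -> (size f <= size g)%N.
Let pi := peval iota t f.

Let pi0 : pi != 0. Proof. exact: peval_neq0. Qed.

Lemma mideal_peval_dvdp g : mideal (peval iota t g) -> f %| g.
Proof.
move=> gm; apply/modp_eq0P/eqP; apply: contraT => r0.
have : mideal (peval iota t (g %% f)).
  have -> : g %% f = g - (g %/ f) * f by rewrite {2}(divp_eq g f) addrC addKr.
  by rewrite rmorphB rmorphM; apply: midealB => //; apply: midealMl => //; apply: O_peval.
by move=> /(f_min r0); rewrite leqNgt ltn_modp f0.
Qed.

Lemma size_min_poly_gt1 : (1 < size f)%N.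
Proof.
rewrite ltnNge; apply/negP => /size1_polyC fE.
apply: (mideal_invN f_mideal pi0); rewrite /pi fE pevalC -fmorphV; apply: O_const.
Qed.

(* [xs 0 O < xs 1 O < ... < xs n.-1 O] is a strictly increasing chain of proper
   principal ideals of [O] containing [pi]. *)
Definition pi_chain (xs : nat -> K) n :=
  (forall i, (i < n)%N -> [/\ xs i != 0, mideal (xs i) & O (pi / xs i)]) /\
  (forall i, (i.+1 < n)%N -> mideal (xs i / xs i.+1)).

Lemma pi_chain_lt xs n i j : pi_chain xs n -> (i < j < n)%N -> mideal (xs i / xs j).
Proof.
move=> [xsP xs_step]; elim: j => // j IH /andP[ij jn].
have [->|lt_ij] := eqVneq i j; first exact: xs_step.
have [xj0 _ _] := xsP j (ltnW jn).
rewrite -[xs i](divfK xj0) -[_ * xs j / _]mulrA.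
apply: midealMr; last exact: midealO (xs_step _ jn).
by apply: IH; rewrite ltn_neqAle lt_ij -ltnS ij ltnW.
Qed.

Lemma primitive_dependence (zs : 'I_m.+1 -> K) : exists2 g : 'I_m.+1 -> {poly F},
  exists j, ~~ (f %| g j) & \sum_i peval iota t (g i) * zs i = 0.
Proof.
have [g0 g00 g0z] := t_dim zs.
pose P n := exists g : 'I_m.+1 -> {poly F},
  [/\ exists i, g i != 0, \sum_i peval iota t (g i) * zs i = 0 & (\sum_i size (g i) = n)%N].
have [_ [g [[i0 gi0] gz <-]] gmin] :=
  exists_minn (ex_intro P _ (ex_intro _ g0 (And3 g00 g0z erefl))).
exists g => //; apply: contrapT => /forallNP fg.
pose h j := g j %/ f.
have gh j : g j = h j * f by rewrite divpK //; apply/negPn/negP; apply: fg.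
have hi0 : h i0 != 0 by apply: contra_neq gi0; rewrite gh => ->; rewrite mul0r.
have size_h i : h i != 0 -> (size (h i) < size (g i))%N.
  move=> h0; rewrite gh size_mul // -subn1.
  by have := size_min_poly_gt1; move: (size _) (size f) => a b; lia.
have : (\sum_i size (h i) < \sum_i size (g i))%N.
  rewrite (bigD1 i0) //= [X in (_ < X)%N](bigD1 i0) //= -addSn.
  apply: leq_add; first exact: size_h.
  by apply: leq_sum => i _; have [->|/size_h/ltnW//] := eqVneq (h i) 0; rewrite size_poly0.
rewrite ltnNge => /negP; apply; apply: gmin; exists h; split => //; first by exists i0.
apply: (mulIf pi0); rewrite mul0r -[RHS]gz mulr_suml; apply: eq_bigr => i _.
by rewrite gh rmorphM /= mulrAC.
Qed.

Lemma pi_chain_bound xs n : pi_chain xs n -> (n <= m)%N.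
Proof.
move=> xs_chain; rewrite leqNgt; apply/negP => mn.
have [xsP _] := xs_chain.
pose zs (i : 'I_m.+1) := xs i.
have zsP (i : 'I_m.+1) := xsP i (leq_trans (ltn_ord i) mn).
have [g [j0 gj0] gz] := primitive_dependence zs.
pose j := [arg max_(j > j0 | ~~ (f %| g j)) (j : nat)].
have [{}j gj jmax] : extremum_spec geq (fun j => ~~ (f %| g j)) (fun j : 'I_m.+1 => (j : nat)) j.
  exact: arg_maxnP.
have [zj0 _ Opi_zj] := zsP j.
apply/negP: gj; rewrite negbK; apply: mideal_peval_dvdp.
have -> : peval iota t (g j) = - \sum_(i | i != j) peval iota t (g i) * (zs i / zs j).
  move: gz; rewrite (bigD1 j) //= => /eqP; rewrite addr_eq0 => /eqP gjz.
  rewrite -[LHS](mulfK zj0) gjz mulNr mulr_suml.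
  by congr (- _); apply: eq_bigr => i _; rewrite mulrA.
apply/midealN/mideal_sum => i ij.
case: (ltngtP i j) => [ltij|ltji|/val_inj eqij]; last by rewrite eqij eqxx in ij.
  apply: midealMl; first exact: O_peval.
  by apply: (pi_chain_lt xs_chain); rewrite ltij (leq_trans (ltn_ord j) mn).
have /divpK <- : f %| g i.
  by apply: contraT => /jmax le_ij; move: ltji; rewrite ltnNge (le_ij : (i <= j)%N).
rewrite rmorphM /= -/pi.
have -> : peval iota t (g i %/ f) * pi * (zs i / zs j) =
    peval iota t (g i %/ f) * (pi / zs j) * zs i by ring.
apply: midealMl.
  by apply: OM; [exact: O_peval | exact: Opi_zj].
by have [] := zsP i.
Qed.

Lemma exists_max_pi_chain : exists xs n, [/\ pi_chain xs n, (0 < n)%N &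
  forall ys k, pi_chain ys k -> (k <= n)%N].
Proof.
have chain1 : exists xs, pi_chain xs 1.
  by exists (fun=> pi); split=> // i _; split; rewrite ?mulfV //; apply: O1.
have [n [xs xs_chain] nmax] := @exists_maxn (fun n => exists xs, pi_chain xs n) m
  (ex_intro _ 1%N chain1) (fun n '(ex_intro xs c) => pi_chain_bound c).
exists xs, n; split => //; first exact: nmax 1%N chain1.
by move=> ys k ys_chain; apply: nmax; exists ys.
Qed.

Section Uniformizer.
Variables (xs : nat -> K) (n : nat).
Hypotheses (xs_chain : pi_chain xs n) (n_gt0 : (0 < n)%N).
Hypothesis n_max : forall ys k, pi_chain ys k -> (k <= n)%N.
Let tau := xs n.-1.

Let tau_props : [/\ tau != 0, mideal tau & O (pi / tau)].
Proof. by case: xs_chain => + _; apply; rewrite prednK. Qed.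
Let tau0 : tau != 0. Proof. by case: tau_props. Qed.
Let mideal_tau : mideal tau. Proof. by case: tau_props. Qed.

Lemma mideal_tau_exp k : mideal (tau ^+ k.+1).
Proof. by rewrite exprS; apply: midealMr => //; apply/OX/midealO. Qed.

Lemma O_tau_expz (k : int) : 0 <= k -> O (tau ^ k).
Proof. by case: k => // k _; apply/OX/midealO. Qed.

(* By maximality of the chain, [tau] generates the maximal ideal. *)
Lemma mideal_div_tau z : mideal z -> O (z / tau).
Proof.
move=> zm; have [->|z0] := eqVneq z 0; first by rewrite mul0r.
apply: contrapT => Ozt.
have Otz : O (tau / z).
  have [//|] := O_valuation (mulf_neq0 z0 (invr_neq0 tau0)).
  by rewrite invfM invrK mulrC.
suff /n_max : pi_chain (fun i => if (i < n)%N then xs i else z) n.+1 by rewrite ltnn.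
have [xsP xs_step] := xs_chain.
split=> i; rewrite ltnS => lt_in.
  case: ifPn => [/xsP//|]; rewrite -leqNgt => le_ni.
  have -> : pi / z = pi / tau * (tau / z) by rewrite mulrA divfK.
  by split => //; apply: OM => //; case: tau_props.
rewrite lt_in; case: ifPn => [/xs_step//|]; rewrite -leqNgt => le_ni.
have -> : i = n.-1 by lia.
by split => //; right; rewrite invfM invrK mulrC.
Qed.

Lemma pi_notin_tau_pow : exists k, ~ O (pi / tau ^+ k).
Proof.
apply: contrapT => /forallNP Opi.
suff /pi_chain_bound : pi_chain (fun i => tau ^+ (m.+1 - i)) m.+1 by rewrite ltnn.
split=> i i_lt.
  have -> : (m.+1 - i = (m - i).+1)%N by lia.
  split; [by rewrite expf_neq0 | exact: mideal_tau_exp | exact: contrapT (Opi _)].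
have -> : (m.+1 - i = (m.+1 - i.+1).+1)%N by lia.
by rewrite exprS mulfK ?expf_neq0.
Qed.

Lemma O_notin_tau_pow z : O z -> z != 0 -> exists k, ~ O (z / tau ^+ k).
Proof.
move=> Oz z0; have [h h0 Ohz] := exists_peval_div Oz z0.
have [e [h' [hE nfh']]] := poly_split_pow size_min_poly_gt1 h0.
have h't0 : peval iota t h' != 0.
  by apply: peval_neq0 t_tr _; apply: contraNneq _ nfh' => ->; apply: dvdp0.
have Oh't : O (peval iota t h')^-1.
  by apply: nmideal_inv (O_peval _) h't0 _ => /mideal_peval_dvdp; apply/negP.
have [k0 nOpi] := pi_notin_tau_pow.
have Otaupi : O (tau ^+ k0 / pi).
  have [//|] := O_valuation (mulf_neq0 pi0 (invr_neq0 (expf_neq0 k0 tau0))).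
  by rewrite invfM invrK mulrC.
apply: contrapT => /forallNP Oztau; apply: (mideal_invN mideal_tau tau0).
(* [pi] and [h'(t)] are not divisible by high powers of [tau], but [z] is. *)
have -> : tau^-1 = (peval iota t h / z) * (z / tau ^+ (k0 * e).+1) *
                   (tau ^+ k0 / pi) ^+ e * (peval iota t h')^-1.
  rewrite hE rmorphM rmorphXn /= -/pi exprSr exprM exprMn exprVn.
  by field; rewrite h't0 z0 tau0 !expf_neq0.
by apply: OM => //; apply: OM; [apply: OM => //; exact: contrapT (Oztau _) | exact: OX].
Qed.

Lemma Ounit_tau_exp z : O z -> z != 0 -> exists k : nat, Ounit (z / tau ^+ k).
Proof.
move=> Oz z0; have [[|k] nOz kmin] := exists_minn (O_notin_tau_pow Oz z0).
  by rewrite expr0 invr1 mulr1 in nOz.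
have Ozk : O (z / tau ^+ k) by apply: contrapT => /kmin; rewrite ltnn.
exists k; split; rewrite ?mulf_neq0 ?invr_eq0 ?expf_neq0 //.
apply: nmideal_inv => //; first by rewrite mulf_neq0 ?invr_eq0 ?expf_neq0.
by move/mideal_div_tau; rewrite -mulrA -invfM -exprSr.
Qed.

Lemma Ounit_tau_expz z : z != 0 -> exists n : int, Ounit (z / tau ^ n).
Proof.
move=> z0; case: (O_valuation z0) => [Oz|Ozi].
  by have [k ?] := Ounit_tau_exp Oz z0; exists k.
have [k /OunitV] := Ounit_tau_exp Ozi (invr_neq0 z0).
by rewrite invfM !invrK => uk; exists (- k%:Z); rewrite -invr_expz invrK.
Qed.

Lemma Ounit_tau_expz_eq0 (j : int) : Ounit (tau ^ j) -> j = 0.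
Proof.
case: j => [[|k]|k] //.
  by move/Ounit_mideal; case; apply: mideal_tau_exp.
by move/OunitV/Ounit_mideal; rewrite NegzE -invr_expz invrK; case; apply: mideal_tau_exp.
Qed.

Lemma Ounit_tau_expz_inj z a b : Ounit (z / tau ^ a) -> Ounit (z / tau ^ b) -> a = b.
Proof.
move=> ua ub; have z0 : z != 0 by case: ua => + _ _; apply: contra_neq => ->; rewrite mul0r.
have /Ounit_tau_expz_eq0/eqP : Ounit (tau ^ (a - b)).
  suff -> : tau ^ (a - b) = z / tau ^ b * (z / tau ^ a)^-1 by apply: OunitM => //; apply: OunitV.
  rewrite expfzDr // -invr_expz invfM invrK; field.
  by rewrite z0 !expfz_neq0.
by rewrite subr_eq0 => /eqP.
Qed.

Definition tau_ord z : int := xget 0 (fun j => Ounit (z / tau ^ j)).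

Lemma tau_ordP z : z != 0 -> Ounit (z / tau ^ tau_ord z).
Proof. by move=> z0; have := xgetPex 0 (Ounit_tau_expz z0). Qed.

Lemma tau_ord_eq z j : Ounit (z / tau ^ j) -> tau_ord z = j.
Proof.
move=> uj; have z0 : z != 0 by case: uj => + _ _; apply: contra_neq => ->; rewrite mul0r.
exact: Ounit_tau_expz_inj (tau_ordP z0) uj.
Qed.

Lemma tau_ord_ge z j : z != 0 -> O (z / tau ^ j) -> j <= tau_ord z.
Proof.
move=> z0 Ozj; rewrite leNgt; apply/negP => lt_j.
apply: (Ounit_mideal (tau_ordP z0)).
have -> : z / tau ^ tau_ord z = z / tau ^ j * tau ^ (j - tau_ord z).
  by rewrite expfzDr // -invr_expz; field; rewrite !expfz_neq0.
apply: midealMl => //; have : 0 < j - tau_ord z by rewrite subr_gt0.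
by case: (j - tau_ord z) => [[|k]|k] // _; apply: mideal_tau_exp.
Qed.

Lemma tau_ordM a b : a != 0 -> b != 0 -> tau_ord (a * b) = tau_ord a + tau_ord b.
Proof.
move=> a0 b0; apply: tau_ord_eq.
have -> : a * b / tau ^ (tau_ord a + tau_ord b) =
    (a / tau ^ tau_ord a) * (b / tau ^ tau_ord b) by rewrite expfzDr // invfM; ring.
by apply: OunitM; apply: tau_ordP.
Qed.

Lemma tau_ordD a b : a != 0 -> b != 0 -> a + b != 0 ->
  Num.min (tau_ord a) (tau_ord b) <= tau_ord (a + b).
Proof.
wlog le_ab : a b / tau_ord a <= tau_ord b.
  move=> W; have [|] := boolP (tau_ord a <= tau_ord b); first exact: W.
  rewrite -ltNge => /ltW le_ba a0 b0 ab0.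
  by rewrite minC addrC; apply: W; rewrite // addrC.
move=> a0 b0 ab0; rewrite (min_idPl le_ab); apply: tau_ord_ge => //.
have -> : (a + b) / tau ^ tau_ord a =
    a / tau ^ tau_ord a + b / tau ^ tau_ord b * tau ^ (tau_ord b - tau_ord a).
  by rewrite expfzDr // -invr_expz; field; rewrite !expfz_neq0.
apply: OD; first by case: (tau_ordP a0).
apply: OM; first by case: (tau_ordP b0).
by apply: O_tau_expz; rewrite subr_ge0.
Qed.

Lemma tau_ord_const c : c != 0 -> tau_ord (iota c) = 0.
Proof.
move=> c0; apply: tau_ord_eq; rewrite expr0z invr1 mulr1.
by split; rewrite ?fmorph_eq0 // -fmorphV.
Qed.

Lemma tau_ord_expz k : tau_ord (tau ^ k) = k.
Proof.
apply: tau_ord_eq; rewrite mulfV ?expfz_neq0 //.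
by split; rewrite ?oner_eq0 ?invr1 //; apply: O1.
Qed.

Lemma tau_ord_place : is_place iota tau_ord.
Proof.
split; [exact: tau_ordM | split; [exact: tau_ordD | split; [exact: tau_ord_const|]]].
by move=> k; exists (tau ^ k); rewrite expfz_neq0 // tau_ord_expz.
Qed.

Lemma tau_ord_lt0 : tau_ord x < 0.
Proof.
rewrite ltNge; apply/negP => ge0; apply: Ox.
rewrite -[x](divfK (expfz_neq0 (tau_ord x) tau0)).
by apply: OM; [case: (tau_ordP x0) | apply: O_tau_expz].
Qed.
End Uniformizer.
End MinimalPoly.

Lemma exists_place_lt0 : exists v, is_place iota v /\ v x < 0.
Proof.
have [f [f0 fm fmin]] := exists_min_peval_mideal.
have [xs [n [xs_chain n_gt0 n_max]]] := exists_max_pi_chain f0 fm fmin.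
exists (tau_ord xs n); split.
  exact: (tau_ord_place f0 fm fmin xs_chain n_gt0 n_max).
exact: (tau_ord_lt0 f0 fm fmin xs_chain n_gt0 n_max).
Qed.
End Discrete.
End ValuationRing.

(** * Poles of non-constant elements and the main theorem *)

Section Pole.
Variables (F : finFieldType) (K : fieldType) (iota : {rmorphism F -> K}).
Lemma nonconst_neq0 (x : K) : ~ (exists c, x = iota c) -> x != 0.
Proof. by apply: contra_notN => /eqP ->; exists 0; rewrite rmorph0. Qed.

Lemma peval_inv_neq (x : K) : is_function_field iota -> ~ (exists c, x = iota c) ->
  forall p, peval iota x^-1 p != x.
Proof.
move=> [F_closed _] xF p; apply/eqP => px; have x0 := nonconst_neq0 xF.
have [c xVc] : exists c, x^-1 = iota c.
  apply: F_closed; exists ('X * p - 1); split.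
    apply/eqP => /(congr1 (fun q : {poly F} => q`_0)).
    by rewrite coefB coefXM coef1 coef0 sub0r => /eqP; rewrite oppr_eq0 oner_eq0.
  apply/eqP; rewrite -[LHS]/(peval iota x^-1 ('X * p - 1)).
  by rewrite rmorphB rmorphM rmorph1 /= pevalX px mulVf ?subrr.
by apply: xF; exists c^-1; rewrite fmorphV -xVc invrK.
Qed.

Lemma exists_place_pole x : is_function_field iota -> ~ (exists c, x = iota c) ->
  exists v, is_place iota v /\ v x < 0.
Proof.
move=> Kff xF; have [_ [t [t_tr [s span]]]] := Kff; have x0 := nonconst_neq0 xF.
have [O O_av O_max] := exists_maximal_avoiding_subring (peval_inv_neq Kff xF).
have O_valuation := maximal_avoiding_valuation (mulfV x0) O_av O_max.
have [O_subring O_Fy Ox] := O_av.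
have O_const c : O (iota c) by have := O_Fy c%:P; rewrite pevalC.
have t_dim := dim_over_le_span span.
have [Ot|Ot] := pselect (O t).
  exact: (exists_place_lt0 O_subring O_const O_valuation Ox Ot t_tr t_dim).
have t0 : t != 0 by apply: contra_notN Ot => /eqP ->; apply: subring0.
have Oti : O t^-1 by case: (O_valuation _ t0).
exact: (exists_place_lt0 O_subring O_const O_valuation Ox Oti
  (transcendentalV t0 t_tr) (dim_over_leV t0 t_tr t_dim)).
Qed.
End Pole.

Section Place.
Variables (F : finFieldType) (K : fieldType) (iota : {rmorphism F -> K}) (w : K -> int).
Hypothesis w_place : is_place iota w.

Lemma place1 : w 1 = 0.
Proof.
have [wM _] := w_place; have := wM 1 1 (oner_neq0 K) (oner_neq0 K).
by rewrite mulr1 => /eqP; rewrite -subr_eq subrr eq_sym => /eqP.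
Qed.

Lemma placeM a b : a != 0 -> b != 0 -> w (a * b) = w a + w b.
Proof. by case: w_place => wM _; apply: wM. Qed.

Lemma placeN z : z != 0 -> w (- z) = w z.
Proof.
have [wM _] := w_place; have N10 : (-1 : K) != 0 by rewrite oppr_eq0 oner_neq0.
have wN1 : w (-1) = 0.
  have := wM _ _ N10 N10; rewrite mulrNN mulr1 place1 => /eqP.
  by rewrite eq_sym -mulr2n -mulr_natr mulf_eq0 => /orP[/eqP|].
by move=> z0; rewrite -mulN1r wM // wN1 add0r.
Qed.

Lemma placeD_lt a b : a != 0 -> b != 0 -> w a < w b -> w (a + b) = w a.
Proof.
move=> a0 b0 lt_ab; have [_ [wD _]] := w_place.
have ab0 : a + b != 0.
  by apply: contraTneq lt_ab => /eqP; rewrite addr_eq0 => /eqP ->; rewrite placeN // ltxx.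
apply/le_anti/andP; split; last by rewrite -[X in X <= _](min_l (ltW lt_ab)); apply: wD.
have nb0 : - b != 0 by rewrite oppr_eq0.
have := wD _ _ ab0 nb0; rewrite addrK => /(_ a0).
by rewrite placeN // ge_min [w b <= _]leNgt lt_ab orbF.
Qed.

Lemma in_Rw_nonconst_neq0 x : in_Rw_nonconst iota w x -> x != 0.
Proof. by move=> [_ /nonconst_neq0]. Qed.

(* A non-constant element has a pole, and [w] is the only place where it may. *)
Lemma in_Rw_nonconst_lt0 x : is_function_field iota -> in_Rw_nonconst iota w x -> w x < 0.
Proof.
move=> Kff /[dup] /in_Rw_nonconst_neq0 x0 [[x_eq0|xR] xF]; first by rewrite x_eq0 eqxx in x0.
have [v [v_place vx]] := exists_place_pole Kff xF.
rewrite ltNge; apply/negP => wx.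
have : 0 <= v x.
  by apply: xR => //; exists x; split => //; apply: contraTneq wx => <-; rewrite -ltNge.
by rewrite leNgt vx.
Qed.

Lemma residue_card_gt0 q : residue_card w q -> (0 < q)%N.
Proof.
move=> [s [_ [_ [_ cover]]]]; have [i i_lt _] := cover 0 (or_introl erefl).
exact: leq_ltn_trans i_lt.
Qed.

Lemma absv1 z : z != 0 -> absv w 1 z = 1.
Proof. by move=> z0; rewrite /absv (negbTE z0) exp1rz. Qed.

Lemma absv_le q y z : (1 < q)%N -> y != 0 -> z != 0 ->
  (absv w q y <= absv w q z) = (w z <= w y).
Proof.
by move=> q_gt1 y0 z0; rewrite /absv (negbTE y0) (negbTE z0) ler_eXz2l ?ltr1n // lerN2.
Qed.
End Place.

Theorem lemma2p1 (F : finFieldType) (K : fieldType) (iota : {rmorphism F -> K})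
    (w : K -> int) (qw : nat) (a b c d : K) :
  is_function_field iota ->
  is_place iota w ->
  residue_card w qw ->
  in_Rw_nonconst iota w a -> in_Rw_nonconst iota w b ->
  in_Rw_nonconst iota w c -> in_Rw_nonconst iota w d ->
  a * d - b * c = 1 ->
  absv w qw b <= absv w qw a ->
  absv w qw d <= absv w qw c.
Proof.
move=> Kff w_place /residue_card_gt0 qw_gt0 aR bR cR dR det.
have [a0 b0 c0 d0] : [/\ a != 0, b != 0, c != 0 & d != 0].
  by split; apply: in_Rw_nonconst_neq0; eassumption.
case: qw qw_gt0 => [|[|q]] // _; first by rewrite !absv1.
rewrite !absv_le // => le_ab; rewrite leNgt; apply/negP => lt_dc.
have wa := in_Rw_nonconst_lt0 Kff aR.
have wd := in_Rw_nonconst_lt0 Kff dR.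
have bc0 : - (b * c) != 0 by rewrite oppr_eq0 mulf_neq0.
have lt_ad_bc : w (a * d) < w (- (b * c)).
  by rewrite (placeN w_place) ?mulf_neq0 // !(placeM w_place) // ler_ltD.
have := placeD_lt w_place (mulf_neq0 a0 d0) bc0 lt_ad_bc.
by rewrite det (place1 w_place) (placeM w_place) //; lia.
Qed.
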